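(* For any sample $(x,u)$, generative parameters $\theta$ and inference parameters $\phi$, the function $\alpha\mapsto \mathrm{ELBO}_{\theta,\phi}(\alpha;x,u)$ is concave on $[0,1]$. It is strictly concave on $[0,1]$ if and only if $q_\phi(z|x)\neq q_\phi(z|x,u)$ on a set of $z$ of positive Lebesgue measure.
   Context: Observations $x\in\mathbb{R}^{d_X}$, covariates $u\in\mathbb{R}^{d_U}$, latents $z\in\mathbb{R}^{d_Z}$, $d_Z<d_X$. Generative parameters $\theta=(f,T,\lambda)$: mixing function $f:\mathbb{R}^{d_Z}\to\mathbb{R}^{d_X}$, label prior density $p_{T,\lambda}(z|u)=\prod_{i=1}^{d_Z}\exp(\lambda_i(u)\cdot T_i(z_i)-A(u)+B(z_i))$ (conditionally factorial exponential family with known $A,B$), decoder density $p_f(x|z)=p_\epsilon(x-f(z))$ for a fixed noise density $p_\epsilon$. Inference parameters $\phi$ determine an encoder density $q_\phi(z|x)$ and a posterior density $q_\phi(z|x,u)$ on $\mathbb{R}^{d_Z}$. For $\alpha\in[0,1]$, with $m_\alpha=\alpha q_\phi(\cdot|x)+(1-\alpha)q_\phi(\cdot|x,u)$, $\mathrm{ELBO}_{\theta,\phi}(\alpha;x,u)=\mathbb{E}_{z\sim m_\alpha}\log p_f(x|z)-\mathcal{D}_{\mathrm{KL}}(m_\alpha\|p_{T,\lambda}(\cdot|u))$. All expectations and divergences appearing are assumed finite. *)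

From HB Require Import structures.
From mathcomp Require Import all_boot all_order all_algebra.
From mathcomp Require Import all_classical all_reals all_analysis.
Set Implicit Arguments.
Unset Strict Implicit.
Unset Printing Implicit Defensive.
Import Order.TTheory GRing.Theory Num.Theory.
Local Open Scope classical_set_scope.
Local Open Scope ring_scope.

(* R^n is represented by n.-tuple R, equipped by MathComp-Analysis with the
   product (= Borel) sigma-algebra generated by the coordinate maps. *)

(* [mu] is Lebesgue measure on R^n: it assigns to every closed box its volume.
   (By uniqueness of the Caratheodory extension this characterizes Lebesgue
   measure on the Borel sets of R^n.) *)
Definition is_lebesgue (R : realType) (n : nat)
    (mu : {measure set (n.-tuple R) -> \bar R}) : Prop :=
  forall a b : n.-tuple R, (forall i, tnth a i <= tnth b i) ->
    mu [set z | forall i, tnth a i <= tnth z i <= tnth b i] =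
    (\prod_(i < n) (tnth b i - tnth a i))%:E.

Definition is_density (R : realType) (n : nat)
    (mu : {measure set (n.-tuple R) -> \bar R}) (p : n.-tuple R -> R) : Prop :=
  [/\ measurable_fun setT p, forall z, 0 <= p z & (\int[mu]_z (p z)%:E = 1)%E].

Definition tsub (R : realType) (n : nat) (x y : n.-tuple R) : n.-tuple R :=
  [tuple tnth x i - tnth y i | i < n].

Definition elog (R : realType) (t : R) : \bar R :=
  if 0 < t then (ln t)%:E else -oo%E.

Definition prior (R : realType) (dZ dU k : nat)
    (T : 'I_dZ -> R -> k.-tuple R) (lam : 'I_dZ -> dU.-tuple R -> k.-tuple R)
    (A : dU.-tuple R -> R) (B : R -> R) (u : dU.-tuple R) (z : dZ.-tuple R) : R :=
  \prod_(i < dZ) expR ((\sum_(j < k) tnth (lam i u) j * tnth (T i (tnth z i)) j)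
                        - A u + B (tnth z i)).

Definition decoder (R : realType) (dX dZ : nat) (peps : dX.-tuple R -> R)
    (f : dZ.-tuple R -> dX.-tuple R) (x : dX.-tuple R) (z : dZ.-tuple R) : R :=
  peps (tsub x (f z)).

Definition mixture (R : realType) (n : nat) (alpha : R) (q1 q2 : n.-tuple R -> R)
    (z : n.-tuple R) : R :=
  alpha * q1 z + (1 - alpha) * q2 z.

Definition loglik_integrand (R : realType) (n : nat) (m : n.-tuple R -> R)
    (lik : n.-tuple R -> R) (z : n.-tuple R) : \bar R :=
  ((m z)%:E * elog (lik z))%E.

(* integrand of KL(m || p) = int m log (m / p), with 0 log 0 = 0 *)
Definition kl_integrand (R : realType) (n : nat) (m p : n.-tuple R -> R)
    (z : n.-tuple R) : \bar R :=
  ((m z)%:E * (elog (m z) - elog (p z)))%E.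

Definition KL (R : realType) (n : nat) (mu : {measure set (n.-tuple R) -> \bar R})
    (m p : n.-tuple R -> R) : \bar R :=
  (\int[mu]_z kl_integrand m p z)%E.

Definition expect_loglik (R : realType) (n : nat)
    (mu : {measure set (n.-tuple R) -> \bar R}) (m lik : n.-tuple R -> R) : \bar R :=
  (\int[mu]_z loglik_integrand m lik z)%E.

Definition ELBO (R : realType) (dX dZ dU k : nat)
    (muZ : {measure set (dZ.-tuple R) -> \bar R})
    (peps : dX.-tuple R -> R) (f : dZ.-tuple R -> dX.-tuple R)
    (T : 'I_dZ -> R -> k.-tuple R) (lam : 'I_dZ -> dU.-tuple R -> k.-tuple R)
    (A : dU.-tuple R -> R) (B : R -> R)
    (q_enc : dX.-tuple R -> dZ.-tuple R -> R)
    (q_post : dX.-tuple R -> dU.-tuple R -> dZ.-tuple R -> R)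
    (x : dX.-tuple R) (u : dU.-tuple R) (alpha : R) : \bar R :=
  let m := mixture alpha (q_enc x) (q_post x u) in
  (expect_loglik muZ m (decoder peps f x) - KL muZ m (prior T lam A B u))%E.

Definition concave_on01 (R : realType) (F : R -> \bar R) : Prop :=
  forall a b t : R, (0 <= a <= 1)%R -> (0 <= b <= 1)%R -> (0 <= t <= 1)%R ->
    ((t%:E * F a + (1 - t)%R%:E * F b) <= F (t * a + (1 - t) * b)%R)%E.

Definition strictly_concave_on01 (R : realType) (F : R -> \bar R) : Prop :=
  forall a b t : R, (0 <= a <= 1)%R -> (0 <= b <= 1)%R -> a != b -> (0 < t < 1)%R ->
    ((t%:E * F a + (1 - t)%R%:E * F b) < F (t * a + (1 - t) * b)%R)%E.

(* Wherever both integrands are finite, the ELBO integrand at z equals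
   m (ln p_f(x|z) + ln p(z|u)) - m ln m with m = m_alpha(z), which is affine in
   alpha.  Since x |-> x ln x is convex, and strictly convex on any segment
   with distinct endpoints, the integrand is concave in alpha, strictly so
   wherever q(z|x) <> q(z|x,u).  Integrating this pointwise concavity gap
   gives concavity, and strict concavity as soon as that set has positive
   measure.  If it is negligible, then m_alpha = q(.|x,u) a.e. for every
   alpha, so the ELBO is constant in alpha and not strictly concave. *)

From HB Require Import structures.
From mathcomp Require Import all_boot all_order all_algebra.
From mathcomp Require Import all_classical all_reals all_analysis.
From mathcomp Require Import lra ring measurable_realfun.
Set Implicit Arguments.
Unset Strict Implicit.
Import Order.TTheory GRing.Theory Num.Theory.
Local Open Scope classical_set_scope.
Local Open Scope ring_scope.

Section xlnx.
Variable R : realType.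
Implicit Types x y c t : R.

Lemma ln_lt_subr1 y : 0 < y -> y != 1 -> ln y < y - 1.
Proof.
move=> y0 y1; have : ln y != 0 by rewrite ln_eq0.
by move=> /expR_gt1Dx; rewrite lnK ?posrE//; lra.
Qed.

(* [x ln c + x - c] is the tangent at [c] of [x |-> x ln x]. *)
Lemma xlnx_tangent_lt x c : 0 <= x -> 0 < c -> x != c ->
  x * ln c + x - c < x * ln x.
Proof.
rewrite le_eqVlt => /orP[/eqP<-|x0] c0 xc; first by lra.
have cx1 : c / x != 1.
  by rewrite -(inj_eq (mulIf (lt0r_neq0 x0))) divfK ?lt0r_neq0// mul1r eq_sym.
have := ln_lt_subr1 (divr_gt0 c0 x0) cx1.
rewrite ln_div ?posrE// -(ltr_pM2l x0) mulrBr mulrBr mulrCA divff ?lt0r_neq0//.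
lra.
Qed.

Lemma xlnx_tangent_le x c : 0 <= x -> 0 < c -> x * ln c + x - c <= x * ln x.
Proof.
move=> x0 c0; have [->|xc] := eqVneq x c; first lra.
exact/ltW/xlnx_tangent_lt.
Qed.

Lemma xlnx_convex x y t : 0 <= x -> 0 <= y -> 0 <= t <= 1 ->
  (t * x + (1 - t) * y) * ln (t * x + (1 - t) * y) <=
    t * (x * ln x) + (1 - t) * (y * ln y).
Proof.
move=> x0 y0 /andP[t0 t1]; set c := t * x + (1 - t) * y.
have t1' : 0 <= 1 - t by lra.
have [c0|c_le0] := ltP 0 c.
  have := ler_wpM2l t0 (xlnx_tangent_le x0 c0).
  have := ler_wpM2l t1' (xlnx_tangent_le y0 c0).
  rewrite /c; nra.
have tx0 : t * x = 0 by rewrite /c in c_le0; nra.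
have ty0 : (1 - t) * y = 0 by rewrite /c in c_le0; nra.
by rewrite /c tx0 ty0 addr0 mul0r !mulrA tx0 ty0 !mul0r addr0.
Qed.

Lemma xlnx_strictly_convex x y t : 0 <= x -> 0 <= y -> 0 < t < 1 -> x != y ->
  (t * x + (1 - t) * y) * ln (t * x + (1 - t) * y) <
    t * (x * ln x) + (1 - t) * (y * ln y).
Proof.
move=> x0 y0 /andP[t0 t1] xy; set c := t * x + (1 - t) * y.
have t1' : 0 < 1 - t by lra.
have cx : c - x = (1 - t) * (y - x) by rewrite /c; ring.
have c0 : 0 < c.
  have : 0 <= c by rewrite /c; nra.
  rewrite le_eqVlt => /orP[/eqP c0|//].
  rewrite /c in c0; have /eqP : t * x = 0 by nra.
  have /eqP : (1 - t) * y = 0 by nra.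
  rewrite !mulf_eq0 (gt_eqF t0) (gt_eqF t1') /= => /eqP y0' /eqP x0'.
  by move: xy; rewrite x0' y0' eqxx.
have xc : x != c.
  by rewrite eq_sym -subr_eq0 cx mulf_eq0 negb_or (gt_eqF t1') subr_eq0 eq_sym.
have : t * (x * ln c + x - c) < t * (x * ln x) by rewrite ltr_pM2l// xlnx_tangent_lt.
have := ler_wpM2l (ltW t1') (xlnx_tangent_le y0 c0).
rewrite /c; nra.
Qed.
End xlnx.

Section ae_ge0_integral.
Local Open Scope ereal_scope.
Context d (T : measurableType d) (R : realType) (mu : {measure set T -> \bar R}).
Variable f : T -> \bar R.
Hypotheses (intf : mu.-integrable setT f) (f_ge0 : {ae mu, forall x, 0 <= f x}).

Lemma ae_ge0_integral_abse : \int[mu]_x f x = \int[mu]_x `|f x|.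
Proof.
apply: ae_eq_integral => //.
- exact: measurable_int intf.
- exact: measurable_int (integrable_abse intf).
- by apply: filterS f_ge0 => x fx0 _; rewrite gee0_abs.
Qed.

Lemma ae_ge0_integral_ge0 : 0 <= \int[mu]_x f x.
Proof. by rewrite ae_ge0_integral_abse integral_ge0. Qed.

Lemma ae_ge0_integral_gt0 (S : set T) : measurable S -> 0 < mu S ->
  {ae mu, forall x, S x -> 0 < f x} -> 0 < \int[mu]_x f x.
Proof.
move=> mS muS_gt0 f_gt0; rewrite lt_neqAle ae_ge0_integral_ge0 andbT eq_sym.
apply: contraTN muS_gt0; rewrite ae_ge0_integral_abse => /eqP.
move/(ae_eq_integral_abs mu measurableT (measurable_int _ intf)) => f_ae0.
have notS : {ae mu, forall x, ~ S x}.
  apply: filterS2 f_ae0 f_gt0 => x /(_ I) /= fx0 Sfx Sx.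
  by have := Sfx Sx; rewrite fx0 ltxx.
have : mu.-negligible S by apply: negligibleS notS => x Sx /=; apply.
by move/(negligibleP _ mS) => ->; rewrite ltxx.
Qed.
End ae_ge0_integral.

Lemma measurable_neq d (T : measurableType d) (R : realType) (f g : T -> R) :
  measurable_fun setT f -> measurable_fun setT g -> measurable [set x | f x != g x].
Proof.
move=> /measurable_EFinP mf /measurable_EFinP mg.
have := measurable_neqe measurableT mf mg.
by rewrite setTI; congr measurable; apply/seteqP; split => x /=; rewrite eqe.
Qed.

Lemma conv_in_unit (R : realFieldType) (a b t : R) :
  0 <= a <= 1 -> 0 <= b <= 1 -> 0 <= t <= 1 -> 0 <= t * a + (1 - t) * b <= 1.
Proof. by move=> /andP[? ?] /andP[? ?] /andP[? ?]; apply/andP; split; nra. Qed.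

Section mixture.
Context (R : realType) (n : nat) (q1 q2 : n.-tuple R -> R).

Lemma mixture_ge0 a z : 0 <= q1 z -> 0 <= q2 z -> 0 <= a <= 1 ->
  0 <= mixture a q1 q2 z.
Proof. by move=> ? ? /andP[? ?]; rewrite /mixture; nra. Qed.

Lemma mixture_conv a b t z : mixture (t * a + (1 - t) * b) q1 q2 z =
  t * mixture a q1 q2 z + (1 - t) * mixture b q1 q2 z.
Proof. by rewrite /mixture; ring. Qed.

Lemma mixture_eq a z : q1 z = q2 z -> mixture a q1 q2 z = q2 z.
Proof. by rewrite /mixture => ->; ring. Qed.

Lemma mixture_neq a b z : a != b -> q1 z != q2 z ->
  mixture a q1 q2 z != mixture b q1 q2 z.
Proof.
move=> ab q12; rewrite -subr_eq0.
have -> : mixture a q1 q2 z - mixture b q1 q2 z = (a - b) * (q1 z - q2 z).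
  by rewrite /mixture; ring.
by rewrite mulf_eq0 negb_or !subr_eq0 ab q12.
Qed.

End mixture.

(* Finiteness excludes [elog = -oo] where [m > 0]; at [m = 0] both sides vanish. *)
Lemma elbo_termE (R : realType) (m l p : R) : 0 <= m ->
  (m%:E * elog l)%E \is a fin_num -> (m%:E * (elog m - elog p))%E \is a fin_num ->
  (m%:E * elog l - m%:E * (elog m - elog p))%E = (m * (ln l + ln p) - m * ln m)%:E.
Proof.
rewrite le_eqVlt => /orP[/eqP<-|m0]; first by rewrite !mul0e !mul0r subrr sube0.
rewrite /elog m0; case: ifPn => l0; last by rewrite mulr_infty gtr0_sg// mul1e.
case: ifPn => p0; last by rewrite /= addey// mulr_infty gtr0_sg// mul1e.
by move=> _ _ /=; rewrite -EFinB; congr EFin; ring.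
Qed.

Section elbo_mixture.
Local Open Scope ereal_scope.
Context (R : realType) (n : nat) (mu : {measure set (n.-tuple R) -> \bar R}).
Variables (q1 q2 lik pr : n.-tuple R -> R).
Hypotheses (q1_ge0 : forall z, (0 <= q1 z)%R) (q2_ge0 : forall z, (0 <= q2 z)%R).

Let m a := mixture a q1 q2.
Let L a := loglik_integrand (m a) lik.
Let K a := kl_integrand (m a) pr.
Let elbo a := expect_loglik mu (m a) lik - KL mu (m a) pr.

Hypothesis integrable_LK : forall a : R, (0 <= a <= 1)%R ->
  mu.-integrable setT (L a) /\ mu.-integrable setT (K a).

Let h a z := L a z - K a z.

Let integrable_h a : (0 <= a <= 1)%R -> mu.-integrable setT (h a).
Proof. by case/integrable_LK => ? ?; exact: integrableB. Qed.

Let elboE a : (0 <= a <= 1)%R -> elbo a = \int[mu]_z h a z.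
Proof. by case/integrable_LK => ? ?; rewrite integralB. Qed.

Let elbo_fin_num a : (0 <= a <= 1)%R -> elbo a \is a fin_num.
Proof. by case/integrable_LK => ? ?; rewrite fin_numB !integrable_fin_num. Qed.

Let hE a : (0 <= a <= 1)%R ->
  {ae mu, forall z, h a z = ((m a z) * (ln (lik z) + ln (pr z)) - m a z * ln (m a z))%:E}.
Proof.
move=> a01; have [/(integrable_ae measurableT) La /(integrable_ae measurableT) Ka] :=
  integrable_LK a01.
apply: filterS2 La Ka => z /(_ I) Lz /(_ I) Kz.
by rewrite /h elbo_termE// mixture_ge0.
Qed.

Let gap a b t z := h (t * a + (1 - t) * b) z - (t%:E * h a z + (1 - t)%:E * h b z).

Let integrable_gap a b t : (0 <= a <= 1)%R -> (0 <= b <= 1)%R -> (0 <= t <= 1)%R ->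
  mu.-integrable setT (gap a b t).
Proof.
move=> a01 b01 t01; apply: integrableB => //; first exact/integrable_h/conv_in_unit.
by apply: integrableD => //; apply: integrableZl => //; exact: integrable_h.
Qed.

Let integral_gap a b t : (0 <= a <= 1)%R -> (0 <= b <= 1)%R -> (0 <= t <= 1)%R ->
  \int[mu]_z gap a b t z = elbo (t * a + (1 - t) * b) - (t%:E * elbo a + (1 - t)%:E * elbo b).
Proof.
move=> a01 b01 t01; have c01 := conv_in_unit a01 b01 t01.
have iZa := integrableZl measurableT t (integrable_h a01).
have iZb := integrableZl measurableT (1 - t) (integrable_h b01).
rewrite (integralB measurableT (integrable_h c01)) ?(integrableD measurableT iZa iZb)//.
rewrite (integralD measurableT iZa iZb) !integralZl//; try exact: integrable_h.
by rewrite !elboE.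
Qed.

Let gapE a b t : (0 <= a <= 1)%R -> (0 <= b <= 1)%R -> (0 <= t <= 1)%R ->
  {ae mu, forall z, gap a b t z =
    (t * (m a z * ln (m a z)) + (1 - t) * (m b z * ln (m b z)) -
     m (t * a + (1 - t) * b) z * ln (m (t * a + (1 - t) * b) z))%:E}.
Proof.
move=> a01 b01 t01; have c01 := conv_in_unit a01 b01 t01.
apply: filterS2 (hE a01) (filterI (hE b01) (hE c01)) => z ha [hb hc].
rewrite /gap ha hb hc -!EFinM -EFinD; congr EFin.
rewrite /m mixture_conv; ring.
Qed.

Let gap_ge0 a b t : (0 <= a <= 1)%R -> (0 <= b <= 1)%R -> (0 <= t <= 1)%R ->
  {ae mu, forall z, 0 <= gap a b t z}.
Proof.
move=> a01 b01 t01; apply: filterS (gapE a01 b01 t01) => z ->.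
by rewrite lee_fin subr_ge0 /m mixture_conv xlnx_convex ?mixture_ge0.
Qed.

Lemma elbo_mixture_concave a b t : (0 <= a <= 1)%R -> (0 <= b <= 1)%R -> (0 <= t <= 1)%R ->
  t%:E * elbo a + (1 - t)%:E * elbo b <= elbo (t * a + (1 - t) * b).
Proof.
move=> a01 b01 t01; rewrite -subre_ge0; last exact/elbo_fin_num/conv_in_unit.
by rewrite -integral_gap//; apply: ae_ge0_integral_ge0; [exact: integrable_gap|exact: gap_ge0].
Qed.

Hypothesis mS : measurable [set z | q1 z != q2 z].

Let elbo_strictly_concave a b t : 0 < mu [set z | q1 z != q2 z] ->
  (0 <= a <= 1)%R -> (0 <= b <= 1)%R -> a != b -> (0 < t < 1)%R ->
  t%:E * elbo a + (1 - t)%:E * elbo b < elbo (t * a + (1 - t) * b).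
Proof.
move=> muS_gt0 a01 b01 ab t01.
have t01' : (0 <= t <= 1)%R by case/andP: t01 => ? ?; apply/andP; split; lra.
rewrite -sube_gt0 -integral_gap//.
apply: (ae_ge0_integral_gt0 (integrable_gap a01 b01 t01') (gap_ge0 a01 b01 t01') mS muS_gt0).
apply: filterS (gapE a01 b01 t01') => z -> /= q12.
rewrite lte_fin subr_gt0 /m mixture_conv xlnx_strictly_convex ?mixture_ge0//.
exact: mixture_neq.
Qed.

Let elbo_const a : mu [set z | q1 z != q2 z] = 0 -> (0 <= a <= 1)%R -> elbo a = elbo 0.
Proof.
move=> muS0 a01; have a0 : (0 <= (0 : R) <= 1)%R by rewrite lexx ler01.
rewrite !elboE//; apply: ae_eq_integral => //; try exact: measurable_int (integrable_h _).
have q12 : {ae mu, forall z, q1 z = q2 z}.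
  by exists [set z | q1 z != q2 z]; split => // z /= /eqP.
apply: filterS q12 => z q12 _.
by rewrite /h /L /K /loglik_integrand /kl_integrand /m !mixture_eq.
Qed.

Lemma elbo_mixture_strictly_concaveP :
  (forall a b t, (0 <= a <= 1)%R -> (0 <= b <= 1)%R -> a != b -> (0 < t < 1)%R ->
    t%:E * elbo a + (1 - t)%:E * elbo b < elbo (t * a + (1 - t) * b)) <->
  0 < mu [set z | q1 z != q2 z].
Proof.
split=> [strict|muS_gt0 a b t]; last exact: elbo_strictly_concave.
rewrite lt0e measure_ge0 andbT; apply/negP => /eqP muS0.
have a0 : (0 <= (0 : R) <= 1)%R by rewrite lexx ler01.
have a1 : (0 <= (1 : R) <= 1)%R by rewrite lexx ler01.
have half : (0 < (2^-1 : R) < 1)%R by apply/andP; split; lra.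
have := strict _ _ _ a1 a0 (oner_neq0 R) half.
rewrite !elbo_const//; last by apply: conv_in_unit => //; apply/andP; split; lra.
by rewrite -(fineK (elbo_fin_num a0)) -!EFinM -EFinD lte_fin; lra.
Qed.
End elbo_mixture.

Theorem proposition6 (R : realType) (dX dZ dU k : nat)
    (muZ : {measure set (dZ.-tuple R) -> \bar R})
    (muX : {measure set (dX.-tuple R) -> \bar R})
    (peps : dX.-tuple R -> R) (f : dZ.-tuple R -> dX.-tuple R)
    (T : 'I_dZ -> R -> k.-tuple R) (lam : 'I_dZ -> dU.-tuple R -> k.-tuple R)
    (A : dU.-tuple R -> R) (B : R -> R)
    (q_enc : dX.-tuple R -> dZ.-tuple R -> R)
    (q_post : dX.-tuple R -> dU.-tuple R -> dZ.-tuple R -> R)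
    (x : dX.-tuple R) (u : dU.-tuple R) :
  (dZ < dX)%N ->
  is_lebesgue muZ -> is_lebesgue muX ->
  is_density muX peps ->
  (forall u', is_density muZ (prior T lam A B u')) ->
  (forall x', is_density muZ (q_enc x')) ->
  (forall x' u', is_density muZ (q_post x' u')) ->
  (* all expectations and divergences appearing are finite *)
  (forall alpha : R, (0 <= alpha <= 1)%R ->
     muZ.-integrable setT
       (loglik_integrand (mixture alpha (q_enc x) (q_post x u))
                         (decoder peps f x)) /\
     muZ.-integrable setT
       (kl_integrand (mixture alpha (q_enc x) (q_post x u)) (prior T lam A B u))) ->
  concave_on01 (ELBO muZ peps f T lam A B q_enc q_post x u) /\
  (strictly_concave_on01 (ELBO muZ peps f T lam A B q_enc q_post x u) <->
   (0 < muZ [set z | q_enc x z != q_post x u z])%E).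
Proof.
move=> _ _ _ _ _ enc_density post_density integrable_terms.
have [m_enc enc_ge0 _] := enc_density x.
have [m_post post_ge0 _] := post_density x u.
split; first exact: elbo_mixture_concave enc_ge0 post_ge0 integrable_terms.
exact: elbo_mixture_strictly_concaveP enc_ge0 post_ge0 integrable_terms
  (measurable_neq m_enc m_post).
Qed.
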